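(* Let $X_1,\dots,X_n$ be i.i.d. with c.d.f. $F$, mean $\mu$ and finite standard deviation $\sigma$. Let $k\in\mathbb{N}$ with $k<n/2$, and let $v>0$ be such that \[\frac e6\,\rho_{F,2}\left(\frac{1}{36v^2}\frac kn\right)\leq v.\] Then \[\Pr\left(\Delta_{n,k}>12v\,\sigma\sqrt{\frac nk}\right)\leq e^{-k}.\]
   Context: With order statistics $X_{(1)}\le\dots\le X_{(n)}$, $\Delta_{n,k}:=X_{(n-k+1)}-X_{(k)}$. For $\xi>0$, $\rho_{F,2}(\xi):=\sup\{(\mathbb{E}[|X_1-\mu|^2Z])^{1/2}/\sigma: 0\le Z\le1 \text{ a random variable (jointly defined with } X_1), \mathbb{E}Z\le\xi\}$ if $\sigma>0$, and $0$ if $\sigma=0$. *)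

From HB Require Import structures.
From mathcomp Require Import all_boot all_order all_algebra.
From mathcomp Require Import all_classical all_reals all_analysis.
Set Implicit Arguments. Unset Strict Implicit. Unset Printing Implicit Defensive.
Import Order.TTheory GRing.Theory Num.Theory.
Local Open Scope classical_set_scope.
Local Open Scope ring_scope.

Definition rv_mean {R : realType} {d : measure_display} {Om : measurableType d}
  (Q : probability Om R) (Y : Om -> R) : R :=
  fine (\int[Q]_w (Y w)%:E)%E.

Definition rv_sd {R : realType} {d : measure_display} {Om : measurableType d}
  (Q : probability Om R) (Y : Om -> R) : R :=
  Num.sqrt (fine (\int[Q]_w (((Y w - rv_mean Q Y) ^+ 2)%:E))%E).

(* Mutual independence of a finite family of real random variables:
   the product rule for every family of Borel sets (subfamilies are
   obtained by taking B i = setT). *)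
Definition mutually_independent {R : realType} {d : measure_display}
  {Om : measurableType d} (P : probability Om R) (n : nat) (X : 'I_n -> Om -> R) :=
  forall B : 'I_n -> set R, (forall i, measurable (B i)) ->
    P (\bigcap_(i in [set: 'I_n]) (X i @^-1` B i)) = (\prod_(i < n) P (X i @^-1` B i))%E.

Definition has_law {R : realType} {d : measure_display} {Om : measurableType d}
  (Q : probability Om R) (Y : Om -> R) (F : set R -> \bar R) :=
  forall A : set R, measurable A -> Q (Y @^-1` A) = F A.

Definition rhoF2 {R : realType} (F : set R -> \bar R) (mu sigma xi : R) : \bar R :=
  if sigma > 0 then
    ereal_sup [set r : \bar R | exists (d : measure_display) (Om : measurableType d)
        (Q : probability Om R) (Y Z : Om -> R),
        [/\ measurable_fun setT Y /\ measurable_fun setT Z, has_law Q Y F,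
            (forall w, 0 <= Z w <= 1),
            (\int[Q]_w (Z w)%:E <= xi%:E)%E &
            r = (Num.sqrt (fine (\int[Q]_w ((`|Y w - mu| ^+ 2 * Z w)%:E))%E) / sigma)%:E]]
  else 0%E.

(* order statistics X_(1) <= ... <= X_(n) of a sample x (1-indexed) *)
Definition ostat {R : realType} {n : nat} (x : 'I_n -> R) (j : nat) : R :=
  nth 0 (sort <=%R [seq x i | i <- enum 'I_n]) j.-1.

Definition Delta {R : realType} {n : nat} (k : nat) (x : 'I_n -> R) : R :=
  ostat x (n - k + 1) - ostat x k.

Definition law {R : realType} {d : measure_display} {Om : measurableType d}
  (Q : probability Om R) (Y : Om -> R) : set R -> \bar R :=
  fun A => Q (Y @^-1` A).

From HB Require Import structures.
From mathcomp Require Import all_boot all_order all_algebra.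
From mathcomp Require Import all_classical all_reals all_analysis.
From mathcomp Require Import measurable_realfun zify ring lra.
Set Implicit Arguments. Unset Strict Implicit. Unset Printing Implicit Defensive.
Import Order.TTheory GRing.Theory Num.Theory.
Local Open Scope classical_set_scope.
Local Open Scope ring_scope.

(* If Delta_{n,k} > 2s, one of X_(n-k+1), X_(k) lies farther than s from mu, hence
   so do at least k of the X_i.  A union bound over the k-subsets of indices and
   independence bound this by C(n,k) p^k <= (n p)^k / k!, where p = P(|X - mu| > s).
   Testing rho_{F,2}(xi) on the indicator of {|X - mu| > s}, admissible by Chebyshev,
   gives s sqrt p <= sigma rho_{F,2}(xi); for s = 6 v sigma sqrt(n/k) the hypothesis
   turns this into n p <= k e^-2, and k^k <= e^k k! yields C(n,k) p^k <= e^-k. *)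

Section sorted_count.
Variables (disp : Order.disp_t) (T : orderType disp) (x0 : T) (s : seq T).
Hypothesis s_sorted : sorted <=%O s.

Lemma sorted_le_nth i j : (i <= j < size s)%N -> (nth x0 s i <= nth x0 s j)%O.
Proof.
move=> /andP[ij js]; apply: (sorted_leq_nth le_trans lexx) => //.
by rewrite inE (leq_ltn_trans ij js).
Qed.

Lemma count_ge_nth j : (j < size s)%N -> (size s - j <= count (>= nth x0 s j)%O s)%N.
Proof.
move=> js; have := count_cat (>= nth x0 s j)%O (take j s) (drop j s).
rewrite cat_take_drop => ->; apply: leq_trans (leq_addl _ _).
rewrite -size_drop; suff: all (>= nth x0 s j)%O (drop j s) by rewrite all_count => /eqP ->.
apply/(all_nthP x0) => i; rewrite size_drop nth_drop => ilt.
by apply: sorted_le_nth; lia.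
Qed.

Lemma count_le_nth j : (j < size s)%N -> (j.+1 <= count (<= nth x0 s j)%O s)%N.
Proof.
move=> js; have := count_cat (<= nth x0 s j)%O (take j.+1 s) (drop j.+1 s).
rewrite cat_take_drop => ->; apply: leq_trans (leq_addr _ _).
have {1}<- : size (take j.+1 s) = j.+1 by rewrite size_takel.
suff: all (<= nth x0 s j)%O (take j.+1 s) by rewrite all_count => /eqP ->.
apply/(all_nthP x0) => i; rewrite size_takel // => ilt.
by rewrite nth_take //; apply: sorted_le_nth; lia.
Qed.

Lemma le_nth_count j y : (j < size s)%N ->
  (size s - j <= count (>= y)%O s)%N -> (y <= nth x0 s j)%O.
Proof.
move=> js; apply: contraTT; rewrite -ltNge -ltnNge ltn_subRL => lt_nth.
rewrite -(count_predC (>= y)%O s) addnC -addnS leq_add2l.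
apply: leq_trans (count_le_nth js) _; apply: sub_count => z /= le_z.
by rewrite -ltNge (le_lt_trans le_z).
Qed.

Lemma nth_le_count j y : (j < size s)%N ->
  (j.+1 <= count (<= y)%O s)%N -> (nth x0 s j <= y)%O.
Proof.
move=> js; apply: contraTT; rewrite -ltNge -ltnNge => lt_nth.
rewrite ltnS -(leq_add2r (count (predC (<= y)%O) s)) count_predC -leq_subLR.
apply: leq_trans (count_ge_nth js) _; apply: sub_count => z /= le_z.
by rewrite -ltNge (lt_le_trans lt_nth).
Qed.
End sorted_count.

Section order_statistics.
Variables (R : realType) (N : nat) (x : 'I_N -> R).

Definition sorted_sample := sort <=%R [seq x i | i <- enum 'I_N].

Lemma sorted_sample_sorted : sorted <=%R sorted_sample.
Proof. exact: (sort_sorted (@le_total _ R)). Qed.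

Lemma size_sorted_sample : size sorted_sample = N.
Proof. by rewrite size_sort size_map size_enum_ord. Qed.

Lemma count_sorted_sample (q : pred R) :
  count q sorted_sample = #|[set i | q (x i)]%SET|.
Proof.
rewrite /sorted_sample (permP (permEl (perm_sort _ _))) count_map.
rewrite cardE size_filter -enumT; apply: eq_count => i /=.
by rewrite -[RHS]/(i \in _) inE.
Qed.

Lemma Delta_sorted_sample k :
  Delta k x = nth 0 sorted_sample (N - k) - nth 0 sorted_sample k.-1.
Proof. by rewrite /Delta /ostat addn1. Qed.

Lemma Delta_gt_card_dev k mu s : (0 < k <= N)%N ->
  2 * s < Delta k x -> (k <= #|[set i | (s < `|x i - mu|)%R]%SET|)%N.
Proof.
case/andP => k0 kN; rewrite Delta_sorted_sample.
rewrite -(count_sorted_sample (fun y => s < `|y - mu|)) => lt_Delta.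
have ss := sorted_sample_sorted; have Nk : (N - k < size sorted_sample)%N.
  by rewrite size_sorted_sample; lia.
have k1 : (k.-1 < size sorted_sample)%N by rewrite size_sorted_sample; lia.
have [hi|lo] : s < nth 0 sorted_sample (N - k) - mu \/ s < mu - nth 0 sorted_sample k.-1.
  by case: (ltP s (nth 0 sorted_sample (N - k) - mu)) => h; [left | right; lra].
- have := count_ge_nth 0 ss Nk; rewrite size_sorted_sample subKn // => /leq_trans; apply.
  apply: sub_count => z /= le_z; apply: (lt_le_trans hi); apply: le_trans (ler_norm _).
  by rewrite lerB.
- have := count_le_nth 0 ss k1; rewrite prednK // => /leq_trans; apply.
  apply: sub_count => z /= le_z; apply: (lt_le_trans lo); rewrite distrC.
  by apply: le_trans (ler_norm _); rewrite lerB.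
Qed.

Lemma Delta_gtP k t : (0 < k <= N)%N -> t < Delta k x <->
  exists a b, [/\ t < x a - x b, (k <= #|[set i | (x a <= x i)%R]%SET|)%N
                & (k <= #|[set i | (x i <= x b)%R]%SET|)%N].
Proof.
case/andP => k0 kN; rewrite Delta_sorted_sample.
have ss := sorted_sample_sorted; have Nk : (N - k < size sorted_sample)%N.
  by rewrite size_sorted_sample; lia.
have k1 : (k.-1 < size sorted_sample)%N by rewrite size_sorted_sample; lia.
have in_sample j : (j < size sorted_sample)%N -> exists a, nth 0 sorted_sample j = x a.
  move=> js; have : nth 0 sorted_sample j \in [seq x i | i <- enum 'I_N].
    by rewrite -(mem_sort <=%R) mem_nth.
  by case/mapP => a _ ->; exists a.
split=> [lt_Delta | [a [b [lt_ab ka kb]]]].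
- have [a ea] := in_sample _ Nk; have [b eb] := in_sample _ k1.
  exists a, b; rewrite -ea -eb -(count_sorted_sample (>= _)) -(count_sorted_sample (<= _)).
  split => //.
  + by have := count_ge_nth 0 ss Nk; rewrite size_sorted_sample subKn.
  + by have := count_le_nth 0 ss k1; rewrite prednK.
- have le_a : x a <= nth 0 sorted_sample (N - k).
    by apply: le_nth_count => //; rewrite size_sorted_sample subKn // count_sorted_sample.
  have le_b : nth 0 sorted_sample k.-1 <= x b.
    by apply: nth_le_count => //; rewrite prednK // count_sorted_sample.
  lra.
Qed.
End order_statistics.

Lemma measurable_set_of_bool_fun d (T : measurableType d) (f : T -> bool) :
  measurable_fun setT f -> measurable [set w | f w].
Proof.
move=> mf; have := mf measurableT [set true] I.
by rewrite setTI preimage_true.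
Qed.

Definition at_least (I : finType) (T : Type) (k : nat) (Q : I -> pred T) : set T :=
  [set w | (k <= #|[set i | Q i w]%SET|)%N].

Lemma at_least_bigsetU (I : finType) (T : Type) k (Q : I -> pred T) :
  at_least k Q =
  \big[setU/set0]_(S : {set I} | #|S| == k) \bigcap_(i in [set` S]) [set w | Q i w].
Proof.
rewrite -bigcup_seq_cond; apply/seteqP; split => w /=.
- move=> kQ.
  have : (0 < #|[set S : {set I} | S \subset [set i | Q i w]%SET & #|S| == k]%SET|)%N.
    by rewrite cards_draws bin_gt0.
  case/card_gt0P => S; rewrite inE => /andP[SQ cS].
  exists S; first by rewrite /= mem_index_enum cS.
  by move=> i /= iS; have := fintype.subsetP SQ i iS; rewrite inE.
- case=> S /andP[_ /eqP <-] QS; apply: subset_leq_card; apply/fintype.subsetP => i iS.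
  by rewrite inE; exact: QS.
Qed.

Lemma measurable_at_least d (T : measurableType d) (I : finType) k (Q : I -> pred T) :
  (forall i, measurable [set w | Q i w]) -> measurable (at_least k Q).
Proof.
move=> mQ; rewrite at_least_bigsetU; apply: bigsetU_measurable => S _.
by apply: fin_bigcap_measurable => // i _; exact: mQ.
Qed.

Lemma measurable_Delta_gt (R : realType) d (Om : measurableType d) N
    (X : 'I_N -> Om -> R) k (t : R) :
  (forall i, measurable_fun setT (X i)) -> (0 < k <= N)%N ->
  measurable [set w | t < Delta k (fun i => X i w)].
Proof.
move=> mX kN.
have mle a b : measurable [set w | X a w <= X b w].
  exact/measurable_set_of_bool_fun/measurable_fun_ler.
rewrite (_ : [set w | _] = \bigcup_(a in setT) \bigcup_(b in setT)
    ([set w | t < X a w - X b w] `&` at_least k (fun i w => X a w <= X i w)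
                                 `&` at_least k (fun i w => X i w <= X b w))).
  apply: fin_bigcup_measurable => // a _; apply: fin_bigcup_measurable => // b _.
  apply: measurableI; last exact: measurable_at_least.
  apply: measurableI; last exact: measurable_at_least.
  exact/measurable_set_of_bool_fun/measurable_fun_ltr/measurable_funB.
apply/seteqP; split => w /=.
  by move=> /(Delta_gtP _ _ kN)[a [b [tab ka kb]]]; exists a => //; exists b.
by case=> a _ [b _ [[tab ka] kb]]; apply/(Delta_gtP _ _ kN); exists a, b.
Qed.

Lemma le_measure_bigsetU d (T : measurableType d) (R : realType)
    (mu : {measure set T -> \bar R}) (I : Type) (r : seq I) (P : pred I)
    (F : I -> set T) :
  (forall i, measurable (F i)) ->
  (mu (\big[setU/set0]_(i <- r | P i) F i) <= \sum_(i <- r | P i) mu (F i))%E.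
Proof.
move=> mF; elim: r => [|i r IH]; first by rewrite !big_nil measure0.
rewrite !big_cons; case: ifP => _ //.
apply: le_trans (measureU2 _ _ _) _ => //; first exact: bigsetU_measurable.
exact: leeD2l.
Qed.

Section independent_sample.
Context {R : realType} {d : measure_display} {Om : measurableType d}.
Variables (P : probability Om R) (N : nat) (X : 'I_N -> Om -> R).
Hypotheses (mX : forall i, measurable_fun setT (X i)) (indepX : mutually_independent P X).
Variables (B : set R) (p : R).
Hypotheses (mB : measurable B) (PXB : forall i, P (X i @^-1` B) = p%:E).

Lemma prob_bigcap_in (S : {set 'I_N}) :
  P (\bigcap_(i in [set` S]) [set w | X i w \in B]) = (p ^+ #|S|)%:E.
Proof.
pose BS i := if i \in S then B else setT.
have -> : \bigcap_(i in [set` S]) [set w | X i w \in B] =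
          \bigcap_(i in [set: 'I_N]) X i @^-1` BS i.
  apply/seteqP; split => w /= XB i.
    by rewrite /BS => _; case: ifP => // iS; rewrite /= -in_setE; exact: XB.
  by move=> iS; have := XB i I; rewrite /BS iS /= in_setE.
rewrite indepX => [|i]; last by rewrite /BS; case: ifP.
rewrite (eq_bigr (fun i => (if i \in S then p else 1)%:E)) => [|i _]; last first.
  by rewrite /BS; case: ifP => _; rewrite ?PXB ?preimage_setT ?probability_setT.
by rewrite prodEFin -big_mkcond /= prodr_const.
Qed.

Lemma measurable_in_preimage i : measurable [set w | X i w \in B].
Proof.
rewrite (_ : [set w | _] = X i @^-1` B).
  by rewrite -[_ @^-1` _]setTI; exact: mX.
by apply/seteqP; split => w; rewrite /= in_setE.
Qed.

Lemma prob_at_least_le k :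
  (P (at_least k (fun i w => X i w \in B)) <= ('C(N, k)%:R * p ^+ k)%:E)%E.
Proof.
rewrite at_least_bigsetU; apply: le_trans (le_measure_bigsetU _ _ _ _) _.
  by move=> S; apply: fin_bigcap_measurable => // i _; exact: measurable_in_preimage.
rewrite (eq_bigr (fun _ => (p ^+ k)%:E)) => [|S /eqP <-]; last exact: prob_bigcap_in.
rewrite sumEFin lee_fin sumr_const mulr_natl.
by rewrite -[in X in _ <= _ *+ X](card_ord N) -card_draws cardsE.
Qed.
End independent_sample.

Lemma ffact_le_expn n m : (n ^_ m <= n ^ m)%N.
Proof.
rewrite ffact_prod -[X in (_ <= _ ^ X)%N](card_ord m) -prod_nat_const.
by apply: leq_prod => i _; exact: leq_subr.
Qed.

Lemma natr_expn_le_expR_fact (R : realType) k :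
  (k%:R : R) ^+ k <= expR k%:R * k`!%:R.
Proof.
case: k => [|k]; first by rewrite expr0 expR0 mul1r.
rewrite -ler_pdivrMr ?ltr0n ?fact_gt0 //.
by apply: le_trans (expR_ge1Dxn k (ler0n R k.+1)); rewrite lerDr.
Qed.

Lemma binomial_tail_le (R : realType) (N k : nat) (p : R) : 0 <= p ->
  N%:R * p <= k%:R * expR (-2) -> 'C(N, k)%:R * p ^+ k <= expR (- k%:R).
Proof.
move=> p0 Np.
have fact_gt0 : (0 : R) < k`!%:R by rewrite ltr0n fact_gt0.
have binN : ('C(N, k)%:R : R) <= N%:R ^+ k / k`!%:R.
  by rewrite ler_pdivlMr // -natrM -natrX ler_nat bin_ffact ffact_le_expn.
apply: le_trans (ler_wpM2r (exprn_ge0 _ p0) binN) _.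
rewrite mulrAC -exprMn ler_pdivrMr //.
apply: le_trans (lerXn2r _ _ _ Np) _; rewrite ?nnegrE ?mulr_ge0 ?expR_ge0 //.
rewrite exprMn -expRM_natr.
have -> : expR (- k%:R) * k`!%:R = expR (-2 * k%:R) * (expR k%:R * k`!%:R) :> R.
  by rewrite mulrA -expRD; congr (expR _ * _); ring.
by rewrite mulrC ler_wpM2l ?expR_ge0 ?natr_expn_le_expR_fact.
Qed.

Section deviation_tail.
Context {R : realType} {d : measure_display} {Om : measurableType d}.
Variables (P : probability Om R) (Y : Om -> R).
Hypotheses (mY : measurable_fun setT Y)
  (Y2 : P.-integrable setT (fun w => (Y w ^+ 2)%:E)).
Local Notation mu := (rv_mean P Y).
Local Notation sigma := (rv_sd P Y).
Local Notation dev_gt s := [set w | (s < `|Y w - mu|)%R].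

Lemma integrable_sqr_sub c : P.-integrable setT (fun w => ((Y w - c) ^+ 2)%:E).
Proof.
have mf : measurable_fun setT (fun w => ((Y w - c) ^+ 2)%:E).
  by apply/measurable_EFinP; apply: measurable_funX; exact: measurable_funB.
apply: (le_integrable measurableT mf (g := fun w => (2 * Y w ^+ 2 + 2 * c ^+ 2)%:E)).
  move=> w _; rewrite !abse_EFin lee_fin ger0_norm ?sqr_ge0 // ger0_norm; last first.
    by rewrite addr_ge0 // mulr_ge0 // sqr_ge0.
  rewrite -subr_ge0 (_ : 2 * Y w ^+ 2 + _ - _ = (Y w + c) ^+ 2) ?sqr_ge0 //.
  by ring.
rewrite (_ : (fun w => (2 * Y w ^+ 2 + 2 * c ^+ 2)%:E) =
    (fun w => 2%:E * (Y w ^+ 2)%:E) \+ (EFin \o cst (2 * c ^+ 2)%R))%E; last first.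
  by apply/funext => w; rewrite /= EFinD EFinM.
by apply: integrableD => //; [exact: integrableZl | exact: finite_measure_integrable_cst].
Qed.

Lemma integral_sqr_dev : (\int[P]_w ((Y w - mu) ^+ 2)%:E = (sigma ^+ 2)%:E)%E.
Proof.
have int_ge0 : (0 <= \int[P]_w ((Y w - mu) ^+ 2)%:E)%E.
  by apply: integral_ge0 => w _; rewrite lee_fin sqr_ge0.
have /integrableP[_] := integrable_sqr_sub mu.
under eq_integral => w _ do rewrite gee0_abs ?lee_fin ?sqr_ge0 //.
move=> int_lt; rewrite /rv_sd sqr_sqrtr ?fine_ge0 // fineK //.
by rewrite ge0_fin_numE.
Qed.

Lemma measurable_dev_gt s : measurable (dev_gt s).
Proof.
apply/measurable_set_of_bool_fun/measurable_fun_ltr => //.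
by apply: measurableT_comp => //; exact: measurable_funB.
Qed.

Lemma integral_sqr_dev_indic_le (A : set Om) : measurable A ->
  (\int[P]_w (`|Y w - mu| ^+ 2 * \1_A w)%:E <= (sigma ^+ 2)%:E)%E.
Proof.
move=> mA; rewrite -integral_sqr_dev; apply: ge0_le_integral => //.
- apply/measurable_EFinP; apply: measurable_funM; last exact: measurable_indic.
  apply: measurable_funX; apply: measurableT_comp; first exact: normr_measurable.
  exact: measurable_funB.
- by apply/measurable_EFinP; apply: measurable_funX; exact: measurable_funB.
move=> w _; rewrite lee_fin real_normK ?num_real // indicE.
by case: (w \in A); rewrite ?mulr1 ?mulr0 ?sqr_ge0.
Qed.

Lemma sqr_mul_prob_dev_gt_le s : 0 <= s ->
  ((s ^+ 2)%:E * P (dev_gt s) <= \int[P]_w (`|Y w - mu| ^+ 2 * \1_(dev_gt s) w)%:E)%E.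
Proof.
set A := dev_gt s; have mA := measurable_dev_gt s.
move=> s0; rewrite -[X in P X]setIT -integral_indic // -ge0_integralZl_EFin ?sqr_ge0 //;
  last by apply/measurable_EFinP; exact: measurable_indic.
apply: ge0_le_integral => //.
- by move=> w _; rewrite lee_fin mulr_ge0 // ?sqr_ge0 // indicE; case: (w \in A).
- by apply/measurable_EFinP; apply: measurable_funM => //; exact: measurable_indic.
- apply/measurable_EFinP; apply: measurable_funM; last exact: measurable_indic.
  apply: measurable_funX; apply: measurableT_comp; first exact: normr_measurable.
  exact: measurable_funB.
move=> w _; rewrite -EFinM lee_fin indicE.
case: (boolP (w \in A)) => [/set_mem Aw|_] /=; last by rewrite !mulr0.
by rewrite !mulr1 lerXn2r ?nnegrE // ltW.
Qed.

Lemma rhoF2_ge_indic (A : set Om) xi :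
  measurable A -> 0 < sigma -> (P A <= xi%:E)%E ->
  ((Num.sqrt (fine (\int[P]_w (`|Y w - mu| ^+ 2 * \1_A w)%:E)) / sigma)%:E <=
   rhoF2 (law P Y) mu sigma xi)%E.
Proof.
move=> mA sigma_gt0 PA; rewrite /rhoF2 sigma_gt0; apply: ereal_sup_ubound.
exists d, Om, P, Y, \1_A; split.
- by split => //; exact: measurable_indic.
- by [].
- by move=> w; rewrite indicE; case: (w \in A); rewrite /= ?lexx ?ler01.
- by rewrite integral_indic // setIT.
- by [].
Qed.

Lemma dev_gt_le_rhoF2 s xi : 0 < sigma -> 0 < s -> sigma ^+ 2 <= xi * s ^+ 2 ->
  ((s * Num.sqrt (fine (P (dev_gt s))) / sigma)%:E <= rhoF2 (law P Y) mu sigma xi)%E.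
Proof.
move=> sigma_gt0 s_gt0 sigma_le; have mA := measurable_dev_gt s.
set W := (\int[P]_w (`|Y w - mu| ^+ 2 * \1_(dev_gt s) w)%:E)%E.
have PAE : P (dev_gt s) = (fine (P (dev_gt s)))%:E by rewrite fineK // fin_num_measure.
have W_le := integral_sqr_dev_indic_le mA.
have W_ge0 : (0 <= W)%E.
  apply: integral_ge0 => w _.
  by rewrite lee_fin mulr_ge0 ?sqr_ge0 // indicE; case: (_ \in _).
have WE : W = (fine W)%:E by rewrite fineK // ge0_fin_numE // (le_lt_trans W_le) ?ltry.
have sp_W : s ^+ 2 * fine (P (dev_gt s)) <= fine W.
  by rewrite -lee_fin -WE EFinM -PAE; exact: sqr_mul_prob_dev_gt_le (ltW s_gt0).
have W_sigma : fine W <= sigma ^+ 2 by rewrite -lee_fin -WE.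
apply: le_trans (rhoF2_ge_indic mA sigma_gt0 _).
  rewrite lee_fin ler_pM2r ?invr_gt0 //.
  rewrite -[s in s * _]gtr0_norm // -sqrtr_sqr -sqrtrM ?sqr_ge0 //.
  exact: ler_wsqrtr.
rewrite PAE lee_fin -(ler_pM2l (exprn_gt0 2 s_gt0)) [_ * xi]mulrC.
exact: le_trans sp_W (le_trans W_sigma sigma_le).
Qed.

(* [rhoF2] vanishes when [sigma = 0], so then the tail must be controlled directly. *)
Lemma prob_dev_gt0_eq0 : sigma = 0 -> P (dev_gt 0) = 0.
Proof.
move=> sigma0; have mf : measurable_fun setT (fun w => ((Y w - mu) ^+ 2)%:E).
  by apply/measurable_EFinP; apply: measurable_funX; exact: measurable_funB.
have : (\int[P]_w `|((Y w - mu) ^+ 2)%:E| = 0)%E.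
  under eq_integral => w _ do rewrite gee0_abs ?lee_fin ?sqr_ge0 //.
  by rewrite integral_sqr_dev sigma0 expr0n.
case/(ae_eq_integral_abs P measurableT mf) => N0 [mN0 PN0 subN0].
apply/eqP; rewrite -measure_le0 -PN0.
apply: le_measure (mem_set (measurable_dev_gt 0)) (mem_set mN0) _ => w /= dev_gt0.
apply: subN0 => /(_ I) /eqP; rewrite eqe sqrf_eq0 subr_eq0 => /eqP Ymu.
by move: dev_gt0; rewrite Ymu subrr normr0 ltxx.
Qed.

Lemma prob_dev_gt_le (N k v : R) : 0 < N -> 0 < k -> 0 < v ->
  ((expR 1 / 6)%:E * rhoF2 (law P Y) mu sigma (1 / (36 * v ^+ 2) * (k / N)) <= v%:E)%E ->
  N * fine (P (dev_gt (6 * v * sigma * Num.sqrt (N / k)))) <= k * expR (-2).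
Proof.
move=> N_gt0 k_gt0 v_gt0 rho_le.
set r := Num.sqrt (N / k); set s := 6 * v * sigma * r; set p := fine (P (dev_gt s)).
have p_ge0 : 0 <= p by rewrite fine_ge0 // measure_ge0.
have r_gt0 : 0 < r by rewrite sqrtr_gt0 divr_gt0.
have [sigma_gt0 | sigma_le0] := ltP 0 sigma; last first.
  have sigma0 : sigma = 0 by apply/le_anti; rewrite sigma_le0 sqrtr_ge0.
  rewrite /p /s sigma0 mulr0 mul0r prob_dev_gt0_eq0 // mulr0.
  by rewrite mulr_ge0 ?expR_ge0 // ltW.
have s_gt0 : 0 < s by rewrite !mulr_gt0.
have xi_s : 1 / (36 * v ^+ 2) * (k / N) * s ^+ 2 = sigma ^+ 2.
  rewrite /s !exprMn [r ^+ 2]sqr_sqrtr ?divr_ge0 ?ltW //.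
  by field; rewrite !gt_eqF.
have rho_ge : ((s * Num.sqrt p / sigma)%:E <=
               rhoF2 (law P Y) mu sigma (1 / (36 * v ^+ 2) * (k / N)))%E.
  by apply: dev_gt_le_rhoF2 => //; rewrite xi_s.
have erp_le1 : expR 1 * r * Num.sqrt p <= 1.
  rewrite -(ler_pM2l v_gt0) mulr1 -lee_fin; apply: le_trans rho_le.
  rewrite (_ : v * _ = expR 1 / 6 * (s * Num.sqrt p / sigma)); last first.
    by rewrite /s; field; rewrite gt_eqF.
  by rewrite EFinM lee_wpmul2l // lee_fin divr_ge0 ?expR_ge0.
have erp_ge0 : 0 <= expR 1 * r * Num.sqrt p.
  by rewrite !mulr_ge0 ?expR_ge0 ?sqrtr_ge0 // ltW.
have := exprn_ile1 2 erp_ge0 erp_le1.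
rewrite !exprMn !sqr_sqrtr => [e2Np_le1||] //; last by rewrite divr_ge0 // ltW.
have -> : expR (-2) = (expR 1 ^+ 2)^-1 :> R by rewrite expRN -expRM_natl mulr1.
rewrite ler_pdivlMr ?exprn_gt0 ?expR_gt0 //.
have -> : N * p * expR 1 ^+ 2 = k * (expR 1 ^+ 2 * (N / k) * p) by field; rewrite gt_eqF.
by rewrite -[X in _ <= X]mulr1 ler_wpM2l // ltW.
Qed.
End deviation_tail.

Theorem corollary4p6 (R : realType) (d : measure_display) (Om : measurableType d)
  (P : probability Om R) (n : nat) (X : 'I_n.+1 -> Om -> R) (k : nat) (v : R) :
  (forall i, measurable_fun setT (X i)) ->
  mutually_independent P X ->
  (forall i, has_law P (X i) (law P (X ord0))) ->
  P.-integrable setT (fun w => (X ord0 w ^+ 2)%:E) ->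
  (1 <= k)%N -> (k.*2 < n.+1)%N ->
  0 < v ->
  ((expR 1 / 6)%:E * rhoF2 (law P (X ord0)) (rv_mean P (X ord0))
      (rv_sd P (X ord0)) (1 / (36 * v ^+ 2) * (k%:R / n.+1%:R)) <= v%:E)%E ->
  (P [set w | (Delta k (fun i => X i w) >
       12 * v * rv_sd P (X ord0) * Num.sqrt (n.+1%:R / k%:R))%R]
     <= (expR (- k%:R))%:E)%E.
Proof.
move=> mX indepX lawX X2 k_gt0 k2N v_gt0 rho_le.
have kN : (0 < k <= n.+1)%N by rewrite -addnn in k2N; lia.
set Y := X ord0; set mu := rv_mean P Y.
set s := 6 * v * rv_sd P Y * Num.sqrt (n.+1%:R / k%:R).
have -> : 12 * v * rv_sd P Y * Num.sqrt (n.+1%:R / k%:R) = 2 * s by rewrite /s; ring.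
pose B := [set y : R | s < `|y - mu|].
have mB : measurable B.
  apply/measurable_set_of_bool_fun/measurable_fun_ltr => //.
  by apply: measurableT_comp => //; exact: measurable_funB.
pose p := fine (P (Y @^-1` B)).
have PXB i : P (X i @^-1` B) = p%:E.
  by rewrite lawX // /law /p fineK // fin_num_measure // -[_ @^-1` _]setTI; exact: mX.
have Np : n.+1%:R * p <= k%:R * expR (-2).
  by have := prob_dev_gt_le (mX ord0) X2 _ _ v_gt0 rho_le; rewrite !ltr0n; apply.
apply: (@le_trans _ _ (P (at_least k (fun i w => X i w \in B)))).
  apply: le_measure; rewrite ?inE.
  - exact: measurable_Delta_gt.
  - by apply: measurable_at_least => i; exact: measurable_in_preimage.
  move=> w /= /(Delta_gt_card_dev mu kN) card_le; apply: leq_trans card_le _.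
  by apply: subset_leq_card; apply/fintype.subsetP => i; rewrite !inE.
apply: le_trans (prob_at_least_le mX indepX mB PXB k) _.
by rewrite lee_fin binomial_tail_le // fine_ge0 // measure_ge0.
Qed.
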